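(* Let $n,d$ be positive integers such that $n$ or $d$ is odd. Then for all but finitely many primes $p$ (the exceptional set depending on $n$ and $d$), for every power $q$ of $p$, \[ \frac{1}{|\mathrm{Conf}_n(\mathbb{F}_q)|}\sum_{f\in \mathrm{Conf}_n(\mathbb{F}_q)} |X_f(\mathbb{F}_q)| = q . \]
   Context: $\mathrm{Conf}_n(\mathbb{F}_q)$ denotes the set of monic, square-free polynomials $f\in\mathbb{F}_q[x]$ of degree $n$ (square-free meaning distinct roots in $\overline{\mathbb{F}}_q$). For such $f$, $X_f$ is the affine curve $y^d=f(x)$ and $X_f(\mathbb{F}_q)=\{(x,y)\in\mathbb{F}_q^2: y^d=f(x)\}$. *)

From HB Require Import structures.
From mathcomp Require Import all_boot all_order all_algebra all_field.
Set Implicit Arguments. Unset Strict Implicit. Unset Printing Implicit Defensive.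
Import GRing.Theory.
Local Open Scope ring_scope.

(* The monic polynomial of degree n with lower coefficients c_0..c_{n-1}:
   x^n + c_{n-1} x^{n-1} + ... + c_0.  This is a bijection between
   {ffun 'I_n -> F} and monic polynomials of degree n over F. *)
Definition monic_of (F : fieldType) (n : nat) (c : {ffun 'I_n -> F}) : {poly F} :=
  'X^n + \sum_(i < n) c i *: 'X^i.

(* Conf_n(F): monic square-free (separable = distinct roots in an
   algebraic closure) polynomials of degree n, encoded by coefficients. *)
Definition Conf (F : finFieldType) (n : nat) : {set {ffun 'I_n -> F}} :=
  [set c | separable_poly (monic_of c)].

Definition npoints (F : finFieldType) (d : nat) (f : {poly F}) : nat :=
  #|[set xy : F * F | xy.2 ^+ d == f.[xy.1]]|.

(* Write |X_f(F)| = sum_x (1 + rho (f x)) with rho a := #{y | y^d = a} - 1. Then rho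
   vanishes at 0, sums to 0 over F and is invariant under a |-> a v^d (v <> 0); call such
   functions balanced. It suffices that sum_{f in Conf_n} psi (f x0) = 0 for balanced psi.
   Over all monic f of degree n this sum vanishes, because shifting the constant
   coefficient permutes the values f x0. Each monic f is uniquely s h^2 with s squarefree
   and h monic, so the full sum splits by deg h; by induction on n the terms with deg h > 0
   vanish, since a |-> psi (a h(x0)^2) is again balanced when h(x0) <> 0. The exception is
   s = 1 for n even, which contributes sum_h psi (h(x0)^2), and this vanishes when d is odd
   because every nonzero w is a d-th power times a square. Hence the average is q for
   every finite field: no prime has to be excluded. *)

From mathcomp Require Import all_boot all_order all_algebra all_field.
From Stdlib Require Import Classical.
From mathcomp Require Import zify.

Set Implicit Arguments. Unset Strict Implicit. Unset Printing Implicit Defensive.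
Import GRing.Theory Num.Theory.
Local Open Scope ring_scope.

Section SquarefreeDecomposition.
Variable F : finFieldType.

Lemma deriv_eq0_pFrobenius p (u : {poly F}) :
  p \in [pchar F] -> u^`() = 0 -> exists w : {poly F}, w ^+ p = u.
Proof.
move=> chp du; have p_gt0 := prime_gt0 (pcharf_prime chp).
have chP : p \in [pchar {poly F}] by rewrite pchar_poly.
have expp_inj : injective (fun a : F => a ^+ p) := fmorph_inj (pFrobenius_aut chp).
pose r := invF expp_inj.
have rK a : r a ^+ p = a by exact: (f_invF expp_inj).
have u_coef i : ~~ (p %| i)%N -> u`_i = 0.
  case: i => [|j]; first by rewrite dvdn0.
  move=> p_ndvd; have /eqP := coef_deriv u j; rewrite du coef0 eq_sym -mulr_natr.
  by rewrite mulf_eq0 -(dvdn_pcharf chp) (negbTE p_ndvd) orbF => /eqP.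
exists (\poly_(i < size u) r u`_(i * p)).
rewrite -(pFrobenius_autE chP) poly_def rmorph_sum /=.
under eq_bigr do rewrite (pFrobenius_autE chP) exprZn rK -exprM.
apply/polyP => k; rewrite coef_sum.
under eq_bigr do rewrite coefZ coefXn.
have [/dvdnP[j ->]|p_ndvd] := boolP (p %| k)%N; last first.
  rewrite u_coef // big1 // => i _; case: eqP => [ki|]; last by rewrite mulr0.
  by case/negP: p_ndvd; rewrite ki dvdn_mull.
have [ltj|gej] := ltnP j (size u).
  rewrite (bigD1 (Ordinal ltj)) //= eqxx mulr1 big1 ?addr0 // => i ne.
  rewrite eqn_pmul2r //; case: eqP => [ji|]; last by rewrite mulr0.
  by case/eqP: ne; apply: val_inj; rewrite /= ji.
rewrite big1 => [|i _]; last first.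
  rewrite eqn_pmul2r //; case: eqP => [ji|]; last by rewrite mulr0.
  by have := ltn_ord i; rewrite -ji ltnNge gej.
by rewrite nth_default // (leq_trans gej) // leq_pmulr.
Qed.

Lemma not_separable_sq_dvdp (f : {poly F}) :
  f != 0 -> ~~ separable_poly f -> exists2 w : {poly F}, (1 < size w)%N & w ^+ 2 %| f.
Proof.
move=> fn0 f_nsep; apply: NNPP => no_sq; case/negP: f_nsep; apply/separable_polyP.
split=> [|u uf su].
  apply/poly_square_freeP => u su; apply/negP => u2f.
  case: (ltngtP (size u) 1) su => // [|u_gt1 _]; last by apply: no_sq; exists u.
  rewrite ltnS leqn0 size_poly_eq0 => /eqP u0 _.
  by move: u2f; rewrite u0 expr0n dvd0p (negbTE fn0).
apply/eqP => du; have [p pr chp] := finPcharP F.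
have [w wu] := deriv_eq0_pFrobenius chp du.
apply: no_sq; exists w.
  rewrite ltnNge; apply/negP => /size1_polyC wC.
  by move: su; rewrite -wu wC -rmorphXn size_polyC; case: (_ != 0).
by rewrite (dvdp_trans _ uf) // -wu dvdp_exp2l // prime_gt1.
Qed.

Lemma monic_squarefree_decomposition (f : {poly F}) : f \is monic ->
  exists s h : {poly F}, [/\ s \is monic, h \is monic, separable_poly s & f = s * h ^+ 2].
Proof.
have [N] := ubnP (size f); elim: N f => // N IH f lt_f_N mf.
have fn0 : f != 0 by apply: monic_neq0.
have [sf|f_nsep] := boolP (separable_poly f).
  by exists f, 1; rewrite monic1 expr1n mulr1.
have [w sw wf] := not_separable_sq_dvdp fn0 f_nsep.
have lw : lead_coef w != 0 by rewrite lead_coef_eq0 -size_poly_gt0 ltnW.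
pose w1 := (lead_coef w)^-1 *: w.
have mw1 : w1 \is monic by rewrite monicE lead_coefZ mulVf.
have mw2 : w1 ^+ 2 \is monic by rewrite monic_exp.
have w1f : w1 ^+ 2 %| f by rewrite exprZn dvdpZl // expf_neq0 // invr_eq0.
pose g := f %/ w1 ^+ 2.
have fg : f = g * w1 ^+ 2 by apply/eqP; rewrite -Pdiv.IdomainMonic.dvdp_eq.
have gn0 : g != 0 by apply: contraNneq fn0 => g0; rewrite fg g0 mul0r.
have mg : g \is monic by rewrite -(monicMr g mw2) -fg.
have lt_g_N : (size g < N)%N.
  have sw2 : (2 < size (w1 ^+ 2))%N.
    have w1n0 : w1 != 0 by rewrite monic_neq0.
    rewrite expr2 size_mul // size_scale ?invr_eq0 //.
    by case: (size w) sw => [|[|k]] // _; lia.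
  move: lt_f_N; rewrite fg size_Mmonic //.
  have := size_poly_gt0 g; rewrite gn0; move: (size g) (size (w1 ^+ 2)) sw2 => a b; lia.
have [s [h [ms mh ss gE]]] := IH g lt_g_N mg.
exists s, (h * w1); split => //; first by rewrite monicMl.
by rewrite fg gE exprMn [RHS]mulrA.
Qed.

Lemma squarefree_decomposition_uniq (s1 h1 s2 h2 : {poly F}) :
  h1 \is monic -> h2 \is monic -> separable_poly s1 -> separable_poly s2 ->
  s1 * h1 ^+ 2 = s2 * h2 ^+ 2 -> h1 = h2 /\ s1 = s2.
Proof.
move=> mh1 mh2 ss1 ss2 e.
have h1n0 : h1 != 0 by apply: monic_neq0.
pose t := gcdp h1 h2.
have tn0 : t != 0 by rewrite gcdp_eq0 negb_and h1n0.
have cop : coprimep (h1 %/ t) (h2 %/ t) by apply: coprimep_div_gcd; rewrite h1n0.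
have h1E : h1 = h1 %/ t * t by rewrite divpK ?dvdp_gcdl.
have h2E : h2 = h2 %/ t * t by rewrite divpK ?dvdp_gcdr.
move: cop h1E h2E; set a1 := h1 %/ t; set a2 := h2 %/ t => cop h1E h2E.
have e2 : s1 * a1 ^+ 2 = s2 * a2 ^+ 2.
  apply: (mulIf (expf_neq0 2 tn0)).
  by rewrite -[LHS]mulrA -[RHS]mulrA -!exprMn -h1E -h2E.
(* The coprime cofactors of gcd(h1, h2) have squares dividing s1 or s2, hence are constants. *)
have unit_cofactor (a b s s' : {poly F}) : coprimep a b -> separable_poly s ->
    s' * a ^+ 2 = s * b ^+ 2 -> size a == 1%N.
  move=> cab ss e'; apply: contraT => sa; have := separable_nosquare ss (isT : (1 < 2)%N) sa.
  by rewrite -(Gauss_dvdpl _ (coprimep_expr 2 (coprimep_expl 2 cab))) -e' dvdp_mull.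
have eqp_t (a h : {poly F}) : size a == 1%N -> h = a * t -> h %= t.
  by move=> /size_poly1P[c cn0 ->] ->; rewrite mul_polyC eqp_scale.
have a1_unit := unit_cofactor a1 a2 s2 s1 cop ss2 e2.
have a2_unit := unit_cofactor a2 a1 s1 s2 (etrans (coprimep_sym _ _) cop) ss1 (esym e2).
have h12 : h1 = h2.
  apply/eqP; rewrite -eqp_monic //; apply: eqp_trans (eqp_t _ _ a1_unit h1E) _.
  by rewrite eqp_sym (eqp_t _ _ a2_unit h2E).
by split => //; apply: (mulIf (expf_neq0 2 h1n0)); rewrite e h12.
Qed.

End SquarefreeDecomposition.

Section MonicOf.
Variables (F : fieldType) (n : nat).
Implicit Type c : {ffun 'I_n -> F}.

Lemma monic_ofE c : monic_of c = 'X^n + \poly_(i < n) (fgraph c)`_i.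
Proof.
by rewrite /monic_of poly_def; congr (_ + _); apply: eq_bigr => i _; rewrite nth_fgraph_ord.
Qed.

Lemma coef_monic_of c k :
  (monic_of c)`_k = if (k < n)%N then (fgraph c)`_k else (k == n)%:R.
Proof.
rewrite monic_ofE coefD coefXn coef_poly.
by case: ltnP => [ltkn|]; rewrite ?(ltn_eqF ltkn) ?add0r ?addr0.
Qed.

Lemma size_monic_of c : size (monic_of c) = n.+1.
Proof. by rewrite monic_ofE size_polyDl ?size_polyXn // ltnS size_poly. Qed.

Lemma monic_of_monic c : monic_of c \is monic.
Proof. by rewrite monicE /lead_coef size_monic_of coef_monic_of ltnn eqxx. Qed.

Lemma monic_of_coef c (i : 'I_n) : (monic_of c)`_i = c i.
Proof. by rewrite coef_monic_of ltn_ord nth_fgraph_ord. Qed.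

Lemma monic_of_inj : injective (@monic_of F n).
Proof. by move=> c1 c2 e; apply/ffunP => i; rewrite -!monic_of_coef e. Qed.

Lemma monic_of_coefs (p : {poly F}) : p \is monic -> size p = n.+1 ->
  monic_of [ffun i : 'I_n => p`_i] = p.
Proof.
move=> /monicP lead_p size_p; apply/polyP => k; rewrite coef_monic_of.
case: ltnP => [ltkn|gekn]; first by rewrite -[k]/(nat_of_ord (Ordinal ltkn)) nth_fgraph_ord ffunE.
have [-> | nekn] := eqVneq k n; first by rewrite -lead_p /lead_coef size_p.
by rewrite nth_default // size_p ltn_neqAle eq_sym nekn.
Qed.

End MonicOf.

Lemma monic_of_ord0 (F : fieldType) (c : {ffun 'I_0 -> F}) : monic_of c = 1.
Proof. by rewrite /monic_of big_ord0 addr0 expr0. Qed.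

Lemma sum_Conf0 (F : finFieldType) (R : nmodType) k (G : {poly F} -> R) :
  k = 0%N -> \sum_(s in Conf F k) G (monic_of s) = G 1.
Proof.
move=> ->; rewrite (eq_bigl predT) => [|s]; last first.
  by rewrite inE monic_of_ord0 unlock /separable_poly coprime1p.
under eq_bigr do rewrite monic_of_ord0.
by rewrite sumr_const card_ffun card_ord expn0.
Qed.

Lemma size_monic_mul_sqr (R : idomainType) (s h : {poly R}) :
  s \is monic -> h \is monic -> size (s * h ^+ 2) = (size s + (size h).-1 * 2)%N.
Proof.
move=> ms mh; have h2_gt0 : (0 < size (h ^+ 2))%N.
  by rewrite size_poly_gt0 expf_neq0 ?monic_neq0.
rewrite size_monicM ?expf_neq0 ?monic_neq0 // -size_exp.
by case: (size (h ^+ 2)) h2_gt0 => // k _; rewrite addnS.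
Qed.

Section SquarefreeDecompositionSum.
Variables (F : finFieldType) (R : nmodType).

Lemma size_monic_of_mul_sqr k m (s : {ffun 'I_k -> F}) (h : {ffun 'I_m -> F}) :
  size (monic_of s * monic_of h ^+ 2) = (k + m.*2).+1.
Proof. by rewrite size_monic_mul_sqr ?monic_of_monic // !size_monic_of muln2. Qed.

Lemma sum_ffun_monic_of_eq n (g : {poly F}) (x : R) : g \is monic -> size g = n.+1 ->
  \sum_(c : {ffun 'I_n -> F}) (if monic_of c == g then x else 0) = x.
Proof.
move=> mg size_g; rewrite (bigD1 [ffun i : 'I_n => g`_i]) //= monic_of_coefs // eqxx.
rewrite big1 ?addr0 // => c ne; case: eqP => // cg; case/eqP: ne.
by apply: monic_of_inj; rewrite monic_of_coefs.
Qed.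

Lemma sum_if_squarefree_decomposition n (c : {ffun 'I_n -> F}) (x : R) :
  \sum_(m < n./2.+1) \sum_(s in Conf F (n - m.*2)) \sum_(h : {ffun 'I_m -> F})
    (if monic_of c == monic_of s * monic_of h ^+ 2 then x else 0) = x.
Proof.
have [s0 [h0 [ms0 mh0 ss0 cE]]] := monic_squarefree_decomposition (monic_of_monic c).
have := size_monic_mul_sqr ms0 mh0; rewrite -cE size_monic_of.
have [m0 size_h0] : exists m0, size h0 = m0.+1.
  by exists (size h0).-1; rewrite prednK // size_poly_gt0 monic_neq0.
rewrite size_h0 /= => size_c.
have le_m0 : (m0.*2 <= n)%N.
  have : (0 < size s0)%N by rewrite size_poly_gt0 monic_neq0.
  by move: size_c; rewrite -muln2; case: (size s0) => // k; lia.
have size_s0 : size s0 = (n - m0.*2).+1.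
  by move: size_c; rewrite -muln2 in le_m0 *; case: (size s0) => [|k]; lia.
have lt_m0 : (m0 < n./2.+1)%N by rewrite ltnS geq_half_double.
have uniq_decomposition k m (s : {ffun 'I_k -> F}) (h : {ffun 'I_m -> F}) :
    s \in Conf F k -> monic_of c = monic_of s * monic_of h ^+ 2 ->
    monic_of h = h0 /\ monic_of s = s0.
  rewrite inE => ss /esym; rewrite cE.
  exact: squarefree_decomposition_uniq (monic_of_monic h) mh0 ss ss0.
rewrite (bigD1 (Ordinal lt_m0)) //= [X in _ + X]big1 ?addr0; last first.
  move=> m ne; apply: big1 => s sC; apply: big1 => h _.
  case: eqP => // /(uniq_decomposition _ _ _ _ sC)[hE _]; case/eqP: ne.
  by apply: val_inj; have := size_monic_of h; rewrite hE size_h0 => -[].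
have s0C : [ffun i : 'I_(n - m0.*2) => s0`_i] \in Conf F (n - m0.*2).
  by rewrite inE monic_of_coefs.
rewrite (bigD1 _ s0C) /= [X in _ + X]big1 ?addr0; last first.
  move=> s /andP[sC ne]; apply: big1 => h _.
  case: eqP => // /(uniq_decomposition _ _ _ _ sC)[_ sE]; case/eqP: ne.
  by apply: monic_of_inj; rewrite monic_of_coefs.
rewrite (bigD1 [ffun i : 'I_m0 => h0`_i]) //= [X in _ + X]big1 ?addr0; last first.
  move=> h ne; case: eqP => // /(uniq_decomposition _ _ _ _ s0C)[hE _]; case/eqP: ne.
  by apply: monic_of_inj; rewrite monic_of_coefs.
by rewrite !monic_of_coefs // -cE eqxx.
Qed.

Lemma sum_monic_of_squarefree_decomposition n (G : {poly F} -> R) :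
  \sum_(c : {ffun 'I_n -> F}) G (monic_of c) =
  \sum_(m < n./2.+1) \sum_(s in Conf F (n - m.*2)) \sum_(h : {ffun 'I_m -> F})
    G (monic_of s * monic_of h ^+ 2).
Proof.
transitivity (\sum_(c : {ffun 'I_n -> F}) \sum_(m < n./2.+1)
    \sum_(s in Conf F (n - m.*2)) \sum_(h : {ffun 'I_m -> F})
    (if monic_of c == monic_of s * monic_of h ^+ 2
     then G (monic_of s * monic_of h ^+ 2) else 0)).
  apply: eq_bigr => c _; rewrite -(sum_if_squarefree_decomposition c (G (monic_of c))).
  apply: eq_bigr => m _; apply: eq_bigr => s _; apply: eq_bigr => h _.
  by case: eqP => [->|].
rewrite exchange_big; apply: eq_bigr => m lt_m; rewrite exchange_big.
apply: eq_bigr => s _; rewrite exchange_big; apply: eq_bigr => h _.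
rewrite sum_ffun_monic_of_eq ?monicMl ?monic_exp ?monic_of_monic //.
by rewrite size_monic_of_mul_sqr subnK // -geq_half_double -ltnS.
Qed.

End SquarefreeDecompositionSum.

Section BalancedSums.
Variables (F : finFieldType) (R : numDomainType) (d : nat).

Definition balanced (psi : F -> R) :=
  [/\ psi 0 = 0, forall a v, v != 0 -> psi (a * v ^+ d) = psi a & \sum_a psi a = 0].

Lemma balanced_scale psi b : balanced psi -> b != 0 -> balanced (fun a => psi (a * b)).
Proof.
move=> [psi0 psi_inv psi_sum] bn0; split => /=; first by rewrite mul0r.
  by move=> a v vn0; rewrite mulrAC psi_inv.
by rewrite (reindex_inj (mulIf bn0)) in psi_sum.
Qed.

Lemma mulrn_card_eq0 (x : R) (A : {pred F}) : (0 < #|A|)%N -> x *+ #|A| = 0 -> x = 0.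
Proof. by move=> A_gt0 /eqP; rewrite mulrn_eq0 eqn0Ngt A_gt0 => /eqP. Qed.

Lemma sum_horner_monic_of_eq0 m (x0 : F) (phi : F -> R) : (0 < m)%N ->
  \sum_z phi z = 0 -> \sum_(h : {ffun 'I_m -> F}) phi (monic_of h).[x0] = 0.
Proof.
move=> m_gt0 phi_sum; pose i0 := Ordinal m_gt0.
pose shift z (h : {ffun 'I_m -> F}) := [ffun i => h i + (i == i0)%:R * z].
have shiftE z h : (monic_of (shift z h)).[x0] = (monic_of h).[x0] + z.
  rewrite /monic_of; under eq_bigr do rewrite ffunE scalerDl.
  rewrite big_split /= addrA hornerD; congr (_ + _).
  rewrite (bigD1 i0) //= big1 => [|i /negbTE ->]; last by rewrite mul0r scale0r.
  by rewrite mul1r expr0 alg_polyC addr0 hornerC.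
have shift_inj z : injective (shift z).
  by move=> h1 h2 /ffunP e; apply/ffunP => i; have := e i; rewrite !ffunE => /addIr.
set S := \sum_h _.
have S_shift z : S = \sum_(h : {ffun 'I_m -> F}) phi ((monic_of h).[x0] + z).
  by rewrite /S (reindex_inj (shift_inj z)); apply: eq_bigr => h _; rewrite shiftE.
apply: (@mulrn_card_eq0 _ F); first by apply/card_gt0P; exists x0.
rewrite -sumr_const (eq_bigr _ (fun z _ => S_shift z)) exchange_big big1 // => h _.
by rewrite -[RHS]phi_sum [RHS](reindex_inj (addrI (monic_of h).[x0])).
Qed.

Lemma sum_balanced_sqr psi : balanced psi -> odd d -> \sum_z psi (z ^+ 2) = 0.
Proof.
move=> [psi0 psi_inv psi_sum] d_odd; set S := \sum_z _.
have S_scale w : w != 0 -> S = \sum_z psi (w * z ^+ 2).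
  move=> wn0; pose e := (d.+1)./2.
  have e2 : (e * 2 = d.+1)%N by rewrite muln2 /e -[in RHS](odd_double_half d.+1) /= d_odd.
  rewrite /S (reindex_inj (mulfI (expf_neq0 e wn0))); apply: eq_bigr => z _.
  by rewrite exprMn -exprM e2 exprS mulrAC psi_inv.
have sum_all : \sum_w \sum_z psi (w * z ^+ 2) = 0.
  rewrite exchange_big big1 // => z _; have [->|zn0] := eqVneq z 0.
    by rewrite big1 // => w _; rewrite expr0n mulr0.
  by rewrite -[RHS]psi_sum [RHS](reindex_inj (mulIf (expf_neq0 2 zn0))).
rewrite (bigD1 0) //= big1 ?add0r in sum_all => [|z _]; last by rewrite mul0r.
apply: (@mulrn_card_eq0 _ [pred w : F | w != 0]).
  by apply/card_gt0P; exists 1; rewrite inE oner_neq0.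
by rewrite -sumr_const -[RHS]sum_all; apply: eq_bigr => w; apply: S_scale.
Qed.

Lemma sum_Conf_horner_eq0 n (x0 : F) psi : (0 < n)%N -> odd n || odd d ->
  balanced psi -> \sum_(c in Conf F n) psi (monic_of c).[x0] = 0.
Proof.
elim/ltn_ind: n psi => n IH psi n_gt0 n_d_odd bal; have [psi0 _ psi_sum] := bal.
have := sum_horner_monic_of_eq0 x0 n_gt0 psi_sum.
rewrite (sum_monic_of_squarefree_decomposition _ (fun f => psi f.[x0])) big_ord_recl /=.
rewrite [X in _ + X]big1 ?addr0 => [|i _]; last first.
  have le_n : ((bump 0 i).*2 <= n)%N by rewrite -geq_half_double.
  have [s_deg0|s_deg_neq0] := eqVneq (n - (bump 0 i).*2)%N 0%N.
    rewrite (sum_Conf0 (fun f => \sum_h psi (f * monic_of h ^+ 2).[x0]) s_deg0).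
    under eq_bigr do rewrite mul1r horner_exp.
    apply: (@sum_horner_monic_of_eq0 i.+1 x0 (fun z => psi (z ^+ 2))) => //.
    apply: sum_balanced_sqr => //; move: n_d_odd.
    by rewrite -(subnK le_n) s_deg0 add0n odd_double.
  rewrite exchange_big big1 // => h _; under eq_bigr do rewrite hornerM horner_exp.
  have [->|hn0] := eqVneq (monic_of h).[x0] 0.
    by rewrite big1 // => s _; rewrite expr0n mulr0.
  have lt_n : (n - (bump 0 i).*2 < n)%N by rewrite ltn_subrL n_gt0.
  apply: (IH _ lt_n (fun a => psi (a * (monic_of h).[x0] ^+ 2))); first by rewrite lt0n.
    by rewrite oddB // odd_double addbF.
  exact: balanced_scale bal (expf_neq0 2 hn0).
under eq_bigr do under eq_bigr do rewrite monic_of_ord0 expr1n mulr1.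
under eq_bigr do rewrite sumr_const card_ffun card_ord expn0 mulr1n.
by move: (n - 0.*2)%N (subn0 n) => k ->.
Qed.

End BalancedSums.

Section PointCount.
Variable F : finFieldType.

Lemma exists_separable_monic n : (0 < n)%N ->
  exists P : {poly F}, [/\ P \is monic, size P = n.+1 & separable_poly P].
Proof.
move=> n_gt0; have [p p_prime chp] := finPcharP F.
have [n_char|n_neq0] := eqVneq (n%:R : F) 0; last first.
  exists ('X^n - 1); split; rewrite ?monic_Xn_sub_1 ?size_Xn_sub_1 //.
  exact: cyclotomic.separable_Xn_sub_1.
have n_gt1 : (1 < n)%N.
  have /dvdn_leq : (p %| n)%N by rewrite (dvdn_pcharf chp) n_char.
  by move=> /(_ n_gt0); apply: leq_trans; rewrite prime_gt1.
have size_X : size (- 'X : {poly F}) = 2 by rewrite size_polyN size_polyX.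
exists ('X^n - 'X); split.
- by rewrite monicE lead_coefDl ?size_polyDl ?size_X ?size_polyXn ?lead_coefXn.
- by rewrite size_polyDl ?size_X ?size_polyXn.
rewrite unlock derivB derivXn derivX -scaler_nat n_char scale0r sub0r.
by rewrite -[X in coprimep _ X]scaleN1r coprimepZr ?oppr_eq0 ?oner_eq0 ?coprimep1.
Qed.

Lemma card_Conf_gt0 n : (0 < n)%N -> (0 < #|Conf F n|)%N.
Proof.
move=> /exists_separable_monic[P [mP sP sepP]]; apply/card_gt0P.
by exists [ffun i : 'I_n => P`_i]; rewrite inE monic_of_coefs.
Qed.

Lemma npointsE d (f : {poly F}) :
  npoints d f = \sum_(x : F) #|[set y : F | y ^+ d == f.[x]]|.
Proof.
under [RHS]eq_bigr do rewrite -sum1_card big_mkcond.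
rewrite /npoints -sum1_card big_mkcond [RHS]pair_bigA.
by apply: eq_bigr => -[x y] _; rewrite !inE.
Qed.

Definition root_excess (R : numDomainType) d (a : F) : R :=
  #|[set y : F | y ^+ d == a]|%:R - 1.

Lemma root_excess_balanced (R : numDomainType) d : (0 < d)%N ->
  balanced d (root_excess R d).
Proof.
move=> d_gt0; split.
- rewrite /root_excess (_ : [set y : F | y ^+ d == 0] = [set 0 : F]) ?cards1 ?subrr //.
  by apply/setP => y; rewrite !inE expf_eq0 d_gt0.
- move=> a v vn0; rewrite /root_excess.
  have -> : [set y : F | y ^+ d == a * v ^+ d] = (fun y => y * v) @: [set y | y ^+ d == a].
    apply/setP => y; rewrite inE; apply/eqP/imsetP => [yd|[z]].
      exists (y / v); last by rewrite divfK.
      by rewrite inE expr_div_n yd mulfK // expf_neq0.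
    by rewrite inE => /eqP <- ->; rewrite exprMn.
  by rewrite card_imset //; apply: mulIf.
- rewrite /root_excess sumrB -natr_sum sumr_const.
  suff -> : \sum_a #|[set y : F | y ^+ d == a]| = #|F| by rewrite subrr.
  rewrite -sum1_card [RHS](partition_big (fun y => y ^+ d) predT) //=.
  by apply: eq_bigr => a _; rewrite -sum1_card; apply: eq_bigl => y; rewrite inE.
Qed.

Lemma sum_Conf_npoints n d : (0 < n)%N -> (0 < d)%N -> odd n || odd d ->
  \sum_(c in Conf F n) npoints d (monic_of c) = (#|F| * #|Conf F n|)%N.
Proof.
move=> n_gt0 d_gt0 n_d_odd; apply/eqP; rewrite -(eqr_nat rat) natr_sum; apply/eqP.
transitivity (\sum_(c in Conf F n) \sum_(x : F) (root_excess rat d (monic_of c).[x] + 1)).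
  by apply: eq_bigr => c _; rewrite npointsE natr_sum; apply: eq_bigr => x _; rewrite subrK.
rewrite exchange_big /=; under eq_bigr => x _ do
  rewrite big_split /= (sum_Conf_horner_eq0 x n_gt0 n_d_odd (root_excess_balanced _ d_gt0)).
by rewrite sumr_const add0r sumr_const -mulrnA mulnC.
Qed.

End PointCount.

Theorem corollary1p3 (n d : nat) :
  (0 < n)%N -> (0 < d)%N -> odd n || odd d ->
  exists S : seq nat, forall p : nat, prime p -> p \notin S ->
    forall F : finFieldType, p \in [pchar F] ->
      ((\sum_(c in Conf F n) npoints d (monic_of c))%:R / (#|Conf F n|)%:R
         : rat) = (#|F|)%:R.
Proof.
move=> n_gt0 d_gt0 n_d_odd; exists [::] => p _ _ F _.
rewrite sum_Conf_npoints // natrM mulfK // pnatr_eq0 -lt0n.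
exact: card_Conf_gt0.
Qed.
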